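(* Assume status quo bias: $f_1(x,y)\ge f_0(x,y)$ for all $x,y\in[0,1]$. Let $f(\pi)=\pi f_1(0,\pi)+(1-\pi)f_0(0,\pi)$ be a $k$-equilibrium discrete-time (resp. continuous-time) dynamics with stable equilibria $\pi^{\mathfrak e}_1\le\dots\le\pi^{\mathfrak e}_k$ and delimiting points $\delta_1,\dots,\delta_{k-1}$, and suppose that for each $i\in\{1,\dots,k\}$ there exist $r_i>0$ and $L_i\in[0,1)$ with $f'(\pi)\le L_i$ for all $\pi\in[\pi^{\mathfrak e}_i-r_i,\pi^{\mathfrak e}_i+r_i]\cap[0,1]$. Let $j$ be the initially advantaged group ($\pi_0(1|j)\ge\pi_0(1|\neg j)$) and suppose $\pi_0(1|\neg j)\neq\delta_i$ for all $i\in\{1,\dots,k-1\}$. Then applying the AA1 policy at all times reaches equality in discrete time (resp. continuous time): $|\pi_t(1|A)-\pi_t(1|B)|\to0$ as $t\to\infty$.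
   Context: Two groups $A,B$; $\neg j$ is the other group. Group $j$ has qualification profile $\pi_t(1|j)\in[0,1]$. Selection rates $\beta_t(v;j)=\tau(v;j)\pi_t(v|j)$. Dynamics: continuously differentiable $f_0,f_1:[0,1]^2\to[0,1]$; discrete time $\pi_{t+1}(1|j)=\pi_t(1|j)f_1(\beta_t(0;j),\beta_t(1;j))+(1-\pi_t(1|j))f_0(\beta_t(0;j),\beta_t(1;j))$; continuous time $\frac{d}{dt}\pi_t(1|j)=\pi_t(1|j)(f_1(\beta_t(0;j),\beta_t(1;j))-1)+(1-\pi_t(1|j))f_0(\beta_t(0;j),\beta_t(1;j))$. Under the unconstrained policy (selection rates $(0,\pi)$) each group follows $\pi_{t+1}=f(\pi_t)$ (DT) or $\dot\pi=f(\pi)-\pi$ (CT). Definition: $f$ is a $k$-equilibrium DT (resp. CT) dynamics if it is continuously differentiable and has fixed points $\pi^{\mathfrak e}_1\le\dots\le\pi^{\mathfrak e}_k$ and fixed points $\delta_i\in(\pi^{\mathfrak e}_i,\pi^{\mathfrak e}_{i+1})$, $i=1,\dots,k-1$, such that, with basins $I_1=[0,\delta_1)$, $I_i=(\delta_{i-1},\delta_i)$ for $1<i<k$, $I_k=(\delta_{k-1},1]$ (and $I_1=[0,1]$ if $k=1$), every $\pi_0\in I_i$ yields $\pi_t\to\pi^{\mathfrak e}_i$ as $t\to\infty$, where $\pi_t=f^t(\pi_0)$ (DT) or $\pi_t$ solves $\dot\pi=f(\pi)-\pi$ from $\pi_0$ (CT). Group $j$ is advantaged at $t$ if $\pi_t(1|j)\ge\pi_t(1|\neg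 j)$. AA1 w.r.t. advantaged $j$: $\tau(1;j)=\pi_t(1|\neg j)/\pi_t(1|j)$, $\tau(0;j)=0$, $\tau(1;\neg j)=1$, $\tau(0;\neg j)=0$, i.e. selection rates $\beta_t(0;\cdot)=0$, $\beta_t(1;\cdot)=\pi_t(1|\neg j)$ for both groups; ''applied at all times'' means w.r.t. the group advantaged at the current time. *)

From Stdlib Require Import Reals Lra.
Open Scope R_scope.

Definition I01 (x : R) : Prop := 0 <= x <= 1.
Definition Sq01 (x y : R) : Prop := I01 x /\ I01 y.

(* derivative of g at x relative to the domain D (one-sided at endpoints) *)
Definition deriv_within (D : R -> Prop) (g : R -> R) (x l : R) : Prop :=
  forall eps, 0 < eps -> exists delta, 0 < delta /\
    forall y, D y -> Rabs (y - x) < delta ->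
      Rabs (g y - g x - l * (y - x)) <= eps * Rabs (y - x).

Definition cont_within (D : R -> Prop) (g : R -> R) : Prop :=
  forall x, D x -> forall eps, 0 < eps -> exists delta, 0 < delta /\
    forall y, D y -> Rabs (y - x) < delta -> Rabs (g y - g x) < eps.

Definition C1_01 (g : R -> R) : Prop :=
  exists g' : R -> R,
    (forall x, I01 x -> deriv_within I01 g x (g' x)) /\ cont_within I01 g'.

Definition cont2_Sq (h : R -> R -> R) : Prop :=
  forall x y, Sq01 x y -> forall eps, 0 < eps -> exists delta, 0 < delta /\
    forall x' y', Sq01 x' y' -> Rabs (x' - x) < delta -> Rabs (y' - y) < delta ->
      Rabs (h x' y' - h x y) < eps.

Definition C1_Sq (h : R -> R -> R) : Prop :=
  exists hx hy : R -> R -> R,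
    cont2_Sq hx /\ cont2_Sq hy /\
    forall x y, Sq01 x y -> forall eps, 0 < eps -> exists delta, 0 < delta /\
      forall x' y', Sq01 x' y' -> Rabs (x' - x) < delta -> Rabs (y' - y) < delta ->
        Rabs (h x' y' - h x y - hx x y * (x' - x) - hy x y * (y' - y))
          <= eps * (Rabs (x' - x) + Rabs (y' - y)).

Definition cv_infty_R (x : R -> R) (l : R) : Prop :=
  forall eps, 0 < eps -> exists T, forall t, T <= t -> Rabs (x t - l) < eps.

Definition CT_sol (f : R -> R) (p0 : R) (p : R -> R) : Prop :=
  p 0 = p0 /\ (forall t, 0 <= t -> I01 (p t)) /\
  forall t, 0 <= t -> deriv_within (fun s => 0 <= s) p t (f (p t) - p t).

(* basin I_i (indices 1..k); I_1 = [0,1] if k = 1 *)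
Definition in_basin (k : nat) (delta : nat -> R) (i : nat) (p : R) : Prop :=
  I01 p /\ (i = 1%nat \/ delta (i - 1)%nat < p) /\ (i = k \/ p < delta i).

(* the fixed-point structure shared by the DT and CT definitions;
   equilibria pe 1 <= ... <= pe k, delimiting points delta 1 .. delta (k-1) *)
Definition k_eq_points (f : R -> R) (k : nat) (pe delta : nat -> R) : Prop :=
  (1 <= k)%nat /\
  C1_01 f /\
  (forall i, (1 <= i <= k)%nat -> I01 (pe i) /\ f (pe i) = pe i) /\
  (forall i, (1 <= i < k)%nat ->
     pe i <= pe (S i) /\ pe i < delta i < pe (S i) /\ f (delta i) = delta i).

Definition k_eq_DT (f : R -> R) (k : nat) (pe delta : nat -> R) : Prop :=
  k_eq_points f k pe delta /\
  forall i, (1 <= i <= k)%nat -> forall p0, in_basin k delta i p0 ->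
    Un_cv (fun t => Nat.iter t f p0) (pe i).

Definition k_eq_CT (f : R -> R) (k : nat) (pe delta : nat -> R) : Prop :=
  k_eq_points f k pe delta /\
  forall i, (1 <= i <= k)%nat -> forall p0, in_basin k delta i p0 ->
    forall p, CT_sol f p0 p -> cv_infty_R p (pe i).

Inductive group : Type := GA | GB.
Definition other (j : group) : group := match j with GA => GB | GB => GA end.

(* a state assigns to each group its qualification profile pi(1|g) *)
Definition state := group -> R.

(* the group advantaged in state s (A in case of a tie; the resulting
   selection rates do not depend on the tie-breaking) *)
Definition advantaged (s : state) : group :=
  if Rle_dec (s GB) (s GA) then GA else GB.

(* AA1 selection rates beta(v; g), v = 0 / 1, w.r.t. the currently
   advantaged group: beta(0;.) = 0, beta(1;.) = pi(1 | not j) *)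
Definition AA1_beta0 (s : state) (g : group) : R := 0.
Definition AA1_beta1 (s : state) (g : group) : R := s (other (advantaged s)).

Definition DT_update (f0 f1 : R -> R -> R) (p b0 b1 : R) : R :=
  p * f1 b0 b1 + (1 - p) * f0 b0 b1.
Definition CT_field (f0 f1 : R -> R -> R) (p b0 b1 : R) : R :=
  p * (f1 b0 b1 - 1) + (1 - p) * f0 b0 b1.

Definition AA1_step (f0 f1 : R -> R -> R) (s : state) : state :=
  fun g => DT_update f0 f1 (s g) (AA1_beta0 s g) (AA1_beta1 s g).

Definition AA1_DT_traj (f0 f1 : R -> R -> R) (s0 : state) (t : nat) : state :=
  Nat.iter t (AA1_step f0 f1) s0.

Definition AA1_CT_sol (f0 f1 : R -> R -> R) (s0 : state) (pi : R -> state) : Prop :=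
  (forall g, pi 0 g = s0 g) /\
  (forall t g, 0 <= t -> I01 (pi t g)) /\
  forall t g, 0 <= t ->
    deriv_within (fun s => 0 <= s) (fun s => pi s g) t
      (CT_field f0 f1 (pi t g) (AA1_beta0 (pi t) g) (AA1_beta1 (pi t) g)).

From Stdlib Require Import Reals Lra Lia Ranalysis5.
Open Scope R_scope.

(* Write c(y) = f1(0,y) - f0(0,y) (gap_factor), which lies in [0,1] by status
   quo bias.  As long as group j is advantaged, AA1 selects both groups at the
   rates (0, pi(1|not j)), so
   - the disadvantaged group follows the unconstrained dynamics f, hence
     converges to the stable equilibrium pe_i of its basin;
   - the gap D = pi(1|j) - pi(1|not j) evolves by D <- c(pi(1|not j)) D (DT),
     resp. D' = (c(pi(1|not j)) - 1) D (CT), so j stays advantaged.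
   The slope condition f'(pe_i) < 1 forces c(pe_i) < 1: if c(pe_i) = 1 then
   f1(0,.) is maximal and f0(0,.) minimal at pe_i, which gives f'(pe_i) >= 1.
   By continuity c is eventually below some q < 1, and the gap decays to 0. *)

Lemma Rabs_le_bounds (x e : R) : Rabs x <= e -> -e <= x <= e.
Proof. unfold Rabs; destruct Rcase_abs; lra. Qed.

Lemma Rabs_small_eq0 (z : R) : (forall eps, 0 < eps -> Rabs z <= eps) -> z = 0.
Proof.
  intros Hz. destruct (Req_dec z 0) as [|Hnz]; [assumption|].
  assert (Hpos : 0 < Rabs z) by (apply Rabs_pos_lt; exact Hnz).
  specialize (Hz (Rabs z / 2) ltac:(lra)). lra.
Qed.

Section DerivWithin.
Variable D : R -> Prop.

Lemma deriv_within_cont (g : R -> R) (x l : R) : deriv_within D g x l ->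
  forall eps, 0 < eps -> exists d, 0 < d /\
    forall y, D y -> Rabs (y - x) < d -> Rabs (g y - g x) < eps.
Proof.
  intros Hg eps Heps.
  destruct (Hg 1 Rlt_0_1) as [d [Hd Hrem]].
  set (M := Rabs l + 1).
  assert (HM : 0 < M) by (pose proof (Rabs_pos l); unfold M; lra).
  exists (Rmin d (eps / M)). split.
  { apply Rmin_pos; [exact Hd | apply Rdiv_lt_0_compat; assumption]. }
  intros y Dy Hy.
  assert (Hyd : Rabs (y - x) < d) by (eapply Rlt_le_trans; [exact Hy | apply Rmin_l]).
  assert (HyM : Rabs (y - x) * M < eps).
  { apply (Rmult_lt_reg_r (/ M)); [apply Rinv_0_lt_compat; exact HM|].
    rewrite Rmult_assoc, Rinv_r, Rmult_1_r by lra.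
    eapply Rlt_le_trans; [exact Hy | apply Rmin_r]. }
  specialize (Hrem y Dy Hyd).
  replace (g y - g x) with ((g y - g x - l * (y - x)) + l * (y - x)) by ring.
  eapply Rle_lt_trans; [apply Rabs_triang|]. rewrite Rabs_mult.
  pose proof (Rabs_pos (y - x)). unfold M in HyM. nra.
Qed.

Lemma deriv_within_ext (g h : R -> R) (x l : R) : (forall y, g y = h y) ->
  deriv_within D g x l -> deriv_within D h x l.
Proof.
  intros Egh Hg eps Heps. destruct (Hg eps Heps) as [d [Hd Hrem]].
  exists d. split; [exact Hd|]. intros y Dy Hy. rewrite <- !Egh. exact (Hrem y Dy Hy).
Qed.

Lemma deriv_within_affine (a b x : R) : deriv_within D (fun y => a + b * y) x b.
Proof.
  intros eps Heps. exists 1. split; [lra|]. intros y _ _.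
  replace (a + b * y - (a + b * x) - b * (y - x)) with 0 by ring.
  rewrite Rabs_R0. pose proof (Rabs_pos (y - x)). nra.
Qed.

Lemma deriv_within_plus (g h : R -> R) (x a b : R) :
  deriv_within D g x a -> deriv_within D h x b ->
  deriv_within D (fun y => g y + h y) x (a + b).
Proof.
  intros Hg Hh eps Heps.
  destruct (Hg (eps / 2) ltac:(lra)) as [d1 [Hd1 R1]].
  destruct (Hh (eps / 2) ltac:(lra)) as [d2 [Hd2 R2]].
  exists (Rmin d1 d2). split; [apply Rmin_pos; assumption|]. intros y Dy Hy.
  specialize (R1 y Dy (Rlt_le_trans _ _ _ Hy (Rmin_l _ _))).
  specialize (R2 y Dy (Rlt_le_trans _ _ _ Hy (Rmin_r _ _))).
  replace (g y + h y - (g x + h x) - (a + b) * (y - x))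
    with ((g y - g x - a * (y - x)) + (h y - h x - b * (y - x))) by ring.
  eapply Rle_trans; [apply Rabs_triang | lra].
Qed.

Lemma deriv_within_minus (g h : R -> R) (x a b : R) :
  deriv_within D g x a -> deriv_within D h x b ->
  deriv_within D (fun y => g y - h y) x (a - b).
Proof.
  intros Hg Hh eps Heps.
  destruct (Hg (eps / 2) ltac:(lra)) as [d1 [Hd1 R1]].
  destruct (Hh (eps / 2) ltac:(lra)) as [d2 [Hd2 R2]].
  exists (Rmin d1 d2). split; [apply Rmin_pos; assumption|]. intros y Dy Hy.
  specialize (R1 y Dy (Rlt_le_trans _ _ _ Hy (Rmin_l _ _))).
  specialize (R2 y Dy (Rlt_le_trans _ _ _ Hy (Rmin_r _ _))).
  replace (g y - h y - (g x - h x) - (a - b) * (y - x))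
    with ((g y - g x - a * (y - x)) + - (h y - h x - b * (y - x))) by ring.
  eapply Rle_trans; [apply Rabs_triang | rewrite Rabs_Ropp; lra].
Qed.

Lemma deriv_within_mult (g h : R -> R) (x a b : R) :
  deriv_within D g x a -> deriv_within D h x b ->
  deriv_within D (fun y => g y * h y) x (a * h x + g x * b).
Proof.
  intros Hg Hh eps Heps.
  set (M := Rabs a + Rabs (g x) + Rabs (h x) + 1).
  assert (HM : 0 < M).
  { pose proof (Rabs_pos a); pose proof (Rabs_pos (g x)); pose proof (Rabs_pos (h x)).
    unfold M; lra. }
  set (e := Rmin 1 (eps / M)).
  assert (He : 0 < e) by (apply Rmin_pos; [lra | apply Rdiv_lt_0_compat; assumption]).
  assert (HeM : e * M <= eps).
  { apply (Rmult_le_reg_r (/ M)); [apply Rinv_0_lt_compat; exact HM|].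
    rewrite Rmult_assoc, Rinv_r, Rmult_1_r by lra. apply Rmin_r. }
  assert (He1 : e <= 1) by apply Rmin_l.
  destruct (Hg e He) as [d1 [Hd1 R1]].
  destruct (Hh e He) as [d2 [Hd2 R2]].
  destruct (deriv_within_cont h x b Hh e He) as [d3 [Hd3 C3]].
  exists (Rmin d1 (Rmin d2 d3)).
  split; [repeat apply Rmin_pos; assumption|]. intros y Dy Hy.
  assert (Hy1 : Rabs (y - x) < d1) by (eapply Rlt_le_trans; [exact Hy | apply Rmin_l]).
  assert (Hy23 : Rabs (y - x) < Rmin d2 d3) by (eapply Rlt_le_trans; [exact Hy | apply Rmin_r]).
  specialize (R1 y Dy Hy1).
  specialize (R2 y Dy (Rlt_le_trans _ _ _ Hy23 (Rmin_l _ _))).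
  specialize (C3 y Dy (Rlt_le_trans _ _ _ Hy23 (Rmin_r _ _))).
  replace (g y * h y - g x * h x - (a * h x + g x * b) * (y - x))
    with ((g y - g x - a * (y - x)) * h y + g x * (h y - h x - b * (y - x))
          + a * (y - x) * (h y - h x)) by ring.
  assert (Hhy : Rabs (h y) <= Rabs (h x) + e).
  { replace (h y) with (h x + (h y - h x)) by ring.
    eapply Rle_trans; [apply Rabs_triang | lra]. }
  pose proof (Rabs_pos (y - x)); pose proof (Rabs_pos (h y));
  pose proof (Rabs_pos (g x)); pose proof (Rabs_pos a);
  pose proof (Rabs_pos (g y - g x - a * (y - x))).
  eapply Rle_trans; [apply Rabs_triang|].
  eapply Rle_trans; [apply Rplus_le_compat_r, Rabs_triang|].
  rewrite !Rabs_mult.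
  assert (T1 : Rabs (g y - g x - a * (y - x)) * Rabs (h y)
               <= e * Rabs (y - x) * (Rabs (h x) + 1)) by nra.
  assert (T2 : Rabs (g x) * Rabs (h y - h x - b * (y - x)) <= Rabs (g x) * (e * Rabs (y - x)))
    by (apply Rmult_le_compat_l; assumption).
  assert (T3 : Rabs a * Rabs (y - x) * Rabs (h y - h x) <= Rabs a * Rabs (y - x) * e)
    by (apply Rmult_le_compat_l; [nra | lra]).
  assert (e * Rabs (y - x) * M <= eps * Rabs (y - x)) by nra.
  unfold M in *. nra.
Qed.

End DerivWithin.

(* Every point of [0,1] is approached within [0,1] from some side, so the
   derivative relative to [0,1] is unique. *)
Lemma deriv_within_I01_unique (g : R -> R) (x l1 l2 : R) : I01 x ->
  deriv_within I01 g x l1 -> deriv_within I01 g x l2 -> l1 = l2.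
Proof.
  intros Hx H1 H2.
  assert (Hdiff : l1 - l2 = 0); [|lra].
  apply Rabs_small_eq0. intros eps Heps.
  destruct (H1 (eps / 2) ltac:(lra)) as [d1 [Hd1 R1]].
  destruct (H2 (eps / 2) ltac:(lra)) as [d2 [Hd2 R2]].
  set (s := Rmin (Rmin d1 d2) 1 / 2).
  assert (Hs : 0 < s)
    by (assert (0 < Rmin (Rmin d1 d2) 1) by (repeat apply Rmin_pos; lra); unfold s; lra).
  assert (Hs1 : s < d1 /\ s < d2 /\ s <= 1 / 2).
  { pose proof (Rmin_l (Rmin d1 d2) 1); pose proof (Rmin_r (Rmin d1 d2) 1);
    pose proof (Rmin_l d1 d2); pose proof (Rmin_r d1 d2). unfold s; lra. }
  unfold I01 in Hx.
  set (y := if Rle_dec x (1 / 2) then x + s else x - s).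
  assert (Hy : I01 y /\ Rabs (y - x) = s).
  { unfold y; destruct Rle_dec; unfold I01.
    - replace (x + s - x) with s by ring. rewrite Rabs_right by lra. lra.
    - replace (x - s - x) with (- s) by ring. rewrite Rabs_Ropp, Rabs_right by lra. lra. }
  destruct Hy as [Iy Ay].
  specialize (R1 y Iy ltac:(lra)). specialize (R2 y Iy ltac:(lra)). rewrite Ay in R1, R2.
  assert (Hprod : Rabs (l1 - l2) * s <= eps * s).
  { rewrite <- Ay, <- Rabs_mult.
    replace ((l1 - l2) * (y - x))
      with ((g y - g x - l2 * (y - x)) - (g y - g x - l1 * (y - x))) by ring.
    eapply Rle_trans; [apply Rabs_triang|]. rewrite Rabs_Ropp, Ay. lra. }
  nra.
Qed.

Lemma deriv_within_max_left (g : R -> R) (x a : R) : 0 < x <= 1 ->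
  (forall y, I01 y -> g y <= g x) -> deriv_within I01 g x a -> 0 <= a.
Proof.
  intros Hx Hmax Hg. destruct (Rle_lt_dec 0 a) as [|Ha]; [assumption|]. exfalso.
  destruct (Hg (- a / 2) ltac:(lra)) as [d [Hd Hrem]].
  set (s := Rmin (d / 2) x).
  assert (Hs : 0 < s <= d / 2 /\ s <= x)
    by (split; [split; [apply Rmin_pos; lra | apply Rmin_l] | apply Rmin_r]).
  assert (Iy : I01 (x - s)) by (unfold I01; lra).
  specialize (Hrem (x - s) Iy).
  replace (x - s - x) with (- s) in Hrem by ring.
  rewrite Rabs_Ropp, Rabs_right in Hrem by lra.
  apply Rabs_le_bounds in Hrem; [|lra].
  specialize (Hmax _ Iy). nra.
Qed.

Lemma deriv_within_min_right (h : R -> R) (x b : R) : 0 <= x < 1 ->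
  (forall y, I01 y -> h x <= h y) -> deriv_within I01 h x b -> 0 <= b.
Proof.
  intros Hx Hmin Hh. destruct (Rle_lt_dec 0 b) as [|Hb]; [assumption|]. exfalso.
  destruct (Hh (- b / 2) ltac:(lra)) as [d [Hd Hrem]].
  set (s := Rmin (d / 2) (1 - x)).
  assert (Hs : 0 < s <= d / 2 /\ s <= 1 - x)
    by (split; [split; [apply Rmin_pos; lra | apply Rmin_l] | apply Rmin_r]).
  assert (Iy : I01 (x + s)) by (unfold I01; lra).
  specialize (Hrem (x + s) Iy).
  replace (x + s - x) with s in Hrem by ring.
  rewrite Rabs_right in Hrem by lra.
  apply Rabs_le_bounds in Hrem; [|lra].
  specialize (Hmin _ Iy). nra.
Qed.

Notation nonneg := (fun s : R => 0 <= s).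

Lemma deriv_halfline_interior (F : R -> R) (t l : R) : 0 < t ->
  deriv_within nonneg F t l -> derivable_pt_lim F t l.
Proof.
  intros Ht HF eps Heps.
  destruct (HF (eps / 2) ltac:(lra)) as [d [Hd Hrem]].
  assert (Hm : 0 < Rmin d t) by (apply Rmin_pos; lra).
  exists (mkposreal _ Hm). intros h Hh0 Hh. simpl in Hh.
  assert (Hhd : Rabs h < d) by (eapply Rlt_le_trans; [exact Hh | apply Rmin_l]).
  assert (Hht : Rabs h < t) by (eapply Rlt_le_trans; [exact Hh | apply Rmin_r]).
  apply Rabs_def2 in Hht.
  specialize (Hrem (t + h) ltac:(lra)). replace (t + h - t) with h in Hrem by ring.
  specialize (Hrem Hhd).
  assert (Hpos : 0 < Rabs h) by (apply Rabs_pos_lt; exact Hh0).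
  replace ((F (t + h) - F t) / h - l) with ((F (t + h) - F t - l * h) / h)
    by (field; exact Hh0).
  unfold Rdiv. rewrite Rabs_mult, Rabs_inv.
  apply (Rmult_lt_reg_r (Rabs h)); [exact Hpos|].
  rewrite Rmult_assoc, Rinv_l by lra. nra.
Qed.

Section HalfLine.
Variables F F' : R -> R.
Hypothesis HF : forall t, 0 <= t -> deriv_within nonneg F t (F' t).

Lemma halfline_mvt (a b : R) : 0 < a <= b ->
  exists c, a <= c <= b /\ F b - F a = F' c * (b - a).
Proof.
  intros Hab. destruct (Req_dec a b) as [<-|Hne].
  - exists a. split; [lra | ring].
  - destruct (MVT_cor2 F F' a b ltac:(lra)) as [c [Ec Hc]].
    + intros c Hc. apply deriv_halfline_interior; [lra | apply HF; lra].
    + exists c. split; [lra | exact Ec].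
Qed.

Lemma halfline_continuous (t : R) : 0 < t -> continuity_pt F t.
Proof.
  intros Ht. apply derivable_continuous_pt. exists (F' t).
  apply deriv_halfline_interior; [exact Ht | apply HF; lra].
Qed.

(* A nonpositive derivative makes F nonincreasing on [0,oo); at the endpoint 0
   the one-sided derivative still provides right-continuity. *)
Lemma halfline_nonincreasing : (forall t, 0 < t -> F' t <= 0) ->
  forall a b, 0 <= a <= b -> F b <= F a.
Proof.
  intros Hneg.
  assert (Hmono : forall a b, 0 < a <= b -> F b <= F a).
  { intros a b Hab. destruct (halfline_mvt a b Hab) as [c [Hc Ec]].
    assert (F' c <= 0) by (apply Hneg; lra). nra. }
  intros a b Hab. destruct (Req_dec a 0) as [Ha0|Ha0]; [|apply Hmono; lra].
  subst a. destruct (Req_dec b 0) as [->|Hb0]; [lra|].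
  apply Rnot_lt_le. intros Hlt.
  destruct (deriv_within_cont nonneg F 0 (F' 0) (HF 0 (Rle_refl 0)) (F b - F 0) ltac:(lra))
    as [d [Hd Hcont]].
  set (e := Rmin (d / 2) b).
  assert (He : 0 < e <= d / 2 /\ e <= b)
    by (split; [split; [apply Rmin_pos; lra | apply Rmin_l] | apply Rmin_r]).
  specialize (Hcont e ltac:(lra) ltac:(rewrite Rminus_0_r, Rabs_right; lra)).
  apply Rabs_def2 in Hcont.
  assert (F b <= F e) by (apply Hmono; lra). lra.
Qed.

End HalfLine.

(* If |D| never increases (D' D <= 0), a continuous D cannot cross 0:
   at a crossing point D^2 would already vanish. *)
Lemma halfline_sign_preserved (D D' : R -> R) :
  (forall t, 0 <= t -> deriv_within nonneg D t (D' t)) ->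
  (forall t, 0 < t -> D' t * D t <= 0) -> 0 <= D 0 ->
  forall t, 0 <= t -> 0 <= D t.
Proof.
  intros HD Hsgn HD0.
  set (V := fun s => D s * D s).
  assert (HV : forall t, 0 <= t -> deriv_within nonneg V t (D' t * D t + D t * D' t))
    by (intros t Ht; apply deriv_within_mult; apply HD; exact Ht).
  assert (Vmono : forall a b, 0 <= a <= b -> V b <= V a)
    by (apply (halfline_nonincreasing V _ HV); intros t Ht; specialize (Hsgn t Ht); lra).
  intros t Ht. apply Rnot_lt_le. intros Hneg.
  assert (Ht0 : 0 < t) by (destruct (Req_dec t 0) as [->|]; lra).
  assert (Vt : 0 < V t) by (unfold V; nra).
  destruct (Req_dec (D 0) 0) as [Hz|Hz].
  - assert (V t <= V 0) by (apply Vmono; lra). unfold V in *. rewrite Hz in *. lra.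
  - destruct (deriv_within_cont nonneg D 0 (D' 0) (HD 0 (Rle_refl 0)) (D 0) ltac:(lra))
      as [d [Hd Hcont]].
    set (e := Rmin (d / 2) (t / 2)).
    assert (He : 0 < e <= d / 2 /\ e <= t / 2)
      by (split; [split; [apply Rmin_pos; lra | apply Rmin_l] | apply Rmin_r]).
    specialize (Hcont e ltac:(lra) ltac:(rewrite Rminus_0_r, Rabs_right; lra)).
    apply Rabs_def2 in Hcont.
    destruct (IVT_interv (fun s => - D s) e t) as [z [Hz1 Hz2]].
    + intros s Hs. apply continuity_pt_opp, (halfline_continuous D D' HD). lra.
    + lra.
    + lra.
    + lra.
    + assert (V t <= V z) by (apply Vmono; lra). unfold V in *.
      replace (D z) with 0 in * by lra. lra.
Qed.

(* A nonnegative, nonincreasing D with D' <= -kappa D from time T on tends to 0: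
   while D >= eps it loses at least kappa*eps per unit of time. *)
Lemma halfline_decay (D D' : R -> R) (kappa T : R) : 0 < kappa -> 0 < T ->
  (forall t, 0 <= t -> deriv_within nonneg D t (D' t)) ->
  (forall t, 0 <= t -> 0 <= D t) -> (forall t, 0 < t -> D' t <= 0) ->
  (forall t, T <= t -> D' t <= - kappa * D t) ->
  cv_infty_R D 0.
Proof.
  intros Hk HT HD Hpos Hneg Hrate eps Heps.
  set (K := kappa * eps).
  assert (HK : 0 < K) by (unfold K; nra).
  assert (HKinv : K * (D T / K) = D T) by (field; lra).
  assert (Hq : 0 <= D T / K) by (apply Rmult_le_pos; [apply Hpos; lra | left; apply Rinv_0_lt_compat; exact HK]).
  exists (T + D T / K + 1). intros t Ht.
  rewrite Rminus_0_r, Rabs_right by (apply Rle_ge, Hpos; lra).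
  apply Rnot_le_lt. intros Hge.
  destruct (halfline_mvt D D' HD T t ltac:(lra)) as [c [Hc Ec]].
  assert (Dc : D t <= D c) by (apply (halfline_nonincreasing D D' HD Hneg); lra).
  assert (D' c <= - K) by (specialize (Hrate c ltac:(lra)); unfold K; nra).
  assert (K * (t - T) >= D T + K) by nra.
  nra.
Qed.
Lemma geometric_decay (u : nat -> R) (q : R) (N : nat) : 0 <= q < 1 ->
  (forall n, 0 <= u n) -> (forall n, (N <= n)%nat -> u (S n) <= q * u n) ->
  Un_cv u 0.
Proof.
  intros Hq Hpos Hstep.
  assert (Hgeo : forall n, u (N + n)%nat <= q ^ n * u N).
  { induction n as [|n IH].
    - rewrite Nat.add_0_r. simpl. lra.
    - rewrite Nat.add_succ_r. simpl.
      specialize (Hstep (N + n)%nat ltac:(lia)). nra. }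
  intros eps Heps.
  set (B := u N + 1).
  assert (HB : 0 < B) by (specialize (Hpos N); unfold B; lra).
  destruct (pow_lt_1_zero q ltac:(rewrite Rabs_right; lra) (eps / B)
              ltac:(apply Rdiv_lt_0_compat; assumption)) as [N2 HN2].
  exists (N + N2)%nat. intros n Hn. unfold R_dist.
  rewrite Rminus_0_r, Rabs_right by (apply Rle_ge, Hpos).
  replace n with (N + (n - N))%nat by lia.
  specialize (HN2 (n - N)%nat ltac:(lia)).
  rewrite Rabs_right in HN2 by (apply Rle_ge, pow_le; lra).
  assert (HepsB : eps / B * B = eps) by (field; lra).
  pose proof (Hgeo (n - N)%nat). pose proof (Hpos N). pose proof (pow_le q (n - N) ltac:(lra)).
  unfold B in *. nra.
Qed.

Lemma basin_exists (k : nat) (delta : nat -> R) (p : R) : (1 <= k)%nat -> I01 p ->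
  (forall i, (1 <= i <= k - 1)%nat -> p <> delta i) ->
  exists i, (1 <= i <= k)%nat /\ in_basin k delta i p.
Proof.
  intros Hk Hp Hnd.
  (* either p lies in a basin I_i with i < n, or above the lower end of I_n *)
  assert (Hscan : forall n, (1 <= n <= k)%nat ->
    (exists i, (1 <= i < n)%nat /\ (i = 1%nat \/ delta (i - 1)%nat < p) /\ p < delta i)
    \/ (n = 1%nat \/ delta (n - 1)%nat < p)).
  { induction n as [|n IH]; intros Hn; [lia|].
    destruct (Nat.eq_dec n 0) as [->|Hn0]; [right; left; reflexivity|].
    destruct (IH ltac:(lia)) as [[i [Hi Hbasin]]|Hlow].
    - left. exists i. split; [lia | exact Hbasin].
    - destruct (Rlt_le_dec p (delta n)) as [Hlt|Hle].
      + left. exists n. split; [lia | split; assumption].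
      + right. right. replace (S n - 1)%nat with n by lia.
        assert (p <> delta n) by (apply Hnd; lia). lra. }
  destruct (Hscan k ltac:(lia)) as [[i [Hi [Hlow Hup]]]|Hlow].
  - exists i. split; [lia|]. split; [exact Hp | split; [exact Hlow | right; exact Hup]].
  - exists k. split; [lia|]. split; [exact Hp | split; [exact Hlow | left; reflexivity]].
Qed.

Lemma AA1_rate_of_advantaged (s : state) (j : group) : s j >= s (other j) ->
  s (other (advantaged s)) = s (other j).
Proof. destruct j; unfold advantaged; destruct Rle_dec; simpl; intros; lra. Qed.

Lemma gap_of_advantaged (s : state) (j : group) : s j >= s (other j) ->
  Rabs (s GA - s GB) = s j - s (other j).
Proof. destruct j; simpl; unfold Rabs; destruct Rcase_abs; lra. Qed.

Lemma convex_comb_I01 (q a b : R) : I01 q -> I01 a -> I01 b -> I01 (q * a + (1 - q) * b).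
Proof. unfold I01; intros; split; nra. Qed.

Lemma C1_Sq_edge_deriv (h : R -> R -> R) (y : R) : C1_Sq h -> I01 y ->
  exists b, deriv_within I01 (fun y => h 0 y) y b.
Proof.
  intros [hx [hy [_ [_ Hdiff]]]] Hy. exists (hy 0 y). intros eps Heps.
  assert (I0 : I01 0) by (unfold I01; lra).
  destruct (Hdiff 0 y (conj I0 Hy) eps Heps) as [d [Hd Hrem]].
  exists d. split; [exact Hd|]. intros y' Hy' Hyd.
  assert (Hx : Rabs (0 - 0) < d) by (rewrite Rminus_0_r, Rabs_R0; exact Hd).
  specialize (Hrem 0 y' (conj I0 Hy') Hx Hyd).
  rewrite Rminus_0_r, Rabs_R0, Rmult_0_r, Rminus_0_r, Rplus_0_l in Hrem. exact Hrem.
Qed.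

Section AA1.
Variables f0 f1 : R -> R -> R.
Hypothesis Hf0 : C1_Sq f0.
Hypothesis Hf1 : C1_Sq f1.
Hypothesis Hf0r : forall x y, Sq01 x y -> I01 (f0 x y).
Hypothesis Hf1r : forall x y, Sq01 x y -> I01 (f1 x y).
Hypothesis Hsq : forall x y, Sq01 x y -> f1 x y >= f0 x y.
Variable f : R -> R.
Hypothesis Hf : forall p, f p = p * f1 0 p + (1 - p) * f0 0 p.

(* When both groups are selected at rates (0, y), the qualification gap between
   them is multiplied by gap_factor y per step (DT), resp. decays at rate
   1 - gap_factor y (CT). *)
Definition gap_factor (y : R) : R := f1 0 y - f0 0 y.

Lemma rates_range (y : R) : I01 y -> 0 <= f0 0 y <= f1 0 y /\ f1 0 y <= 1.
Proof.
  intros Hy. assert (S0 : Sq01 0 y) by (split; [unfold I01; lra | exact Hy]).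
  pose proof (Hf0r 0 y S0); pose proof (Hf1r 0 y S0); pose proof (Hsq 0 y S0).
  unfold I01 in *. lra.
Qed.

Lemma gap_factor_range (y : R) : I01 y -> 0 <= gap_factor y <= 1.
Proof. intros Hy. pose proof (rates_range y Hy). unfold gap_factor. lra. Qed.

Lemma gap_factor_near (p : R) : I01 p -> gap_factor p < 1 ->
  exists q d, 0 <= q < 1 /\ 0 < d /\
    forall y, I01 y -> Rabs (y - p) < d -> gap_factor y <= q.
Proof.
  intros Hp Hlt. pose proof (gap_factor_range p Hp).
  destruct (C1_Sq_edge_deriv f0 p Hf0 Hp) as [b0 D0].
  destruct (C1_Sq_edge_deriv f1 p Hf1 Hp) as [b1 D1].
  set (e := (1 - gap_factor p) / 4).
  destruct (deriv_within_cont I01 _ p b0 D0 e ltac:(unfold e; lra)) as [d0 [Hd0 C0]].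
  destruct (deriv_within_cont I01 _ p b1 D1 e ltac:(unfold e; lra)) as [d1 [Hd1 C1]].
  exists ((1 + gap_factor p) / 2), (Rmin d0 d1).
  split; [lra|]. split; [apply Rmin_pos; assumption|].
  intros y Hy Hyd.
  specialize (C0 y Hy (Rlt_le_trans _ _ _ Hyd (Rmin_l _ _))).
  specialize (C1 y Hy (Rlt_le_trans _ _ _ Hyd (Rmin_r _ _))).
  apply Rabs_def2 in C0; apply Rabs_def2 in C1. cbv beta in C0, C1.
  unfold e in *. unfold gap_factor in *. lra.
Qed.

(* The key use of the slope condition: if f'(p) < 1 then gap_factor p < 1.
   Otherwise f1(0,p) = 1 is a maximum and f0(0,p) = 0 a minimum of the rates,
   so f'(p) = gap_factor p + p f1' + (1-p) f0' >= 1 by the extremum signs. *)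
Lemma gap_factor_lt_one (p fdp : R) : I01 p -> deriv_within I01 f p fdp -> fdp < 1 ->
  gap_factor p < 1.
Proof.
  intros Hp Hfd Hlt.
  destruct (C1_Sq_edge_deriv f1 p Hf1 Hp) as [a Da].
  destruct (C1_Sq_edge_deriv f0 p Hf0 Hp) as [b Db].
  assert (Did : deriv_within I01 (fun y => y) p 1).
  { apply (deriv_within_ext I01 (fun y => 0 + 1 * y)); [intros; ring | apply deriv_within_affine]. }
  assert (Dco : deriv_within I01 (fun y => 1 - y) p (-1)).
  { apply (deriv_within_ext I01 (fun y => 1 + -1 * y)); [intros; ring | apply deriv_within_affine]. }
  assert (Hf' : deriv_within I01 f p (gap_factor p + p * a + (1 - p) * b)).
  { pose proof (deriv_within_plus I01 _ _ p _ _
      (deriv_within_mult I01 _ _ p _ _ Did Da) (deriv_within_mult I01 _ _ p _ _ Dco Db)) as Hsum.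
    apply (deriv_within_ext I01 _ f p) in Hsum; [|intros y; rewrite Hf; reflexivity].
    replace (gap_factor p + p * a + (1 - p) * b)
      with (1 * f1 0 p + p * a + (-1 * f0 0 p + (1 - p) * b)) by (unfold gap_factor; ring).
    exact Hsum. }
  rewrite (deriv_within_I01_unique f p _ _ Hp Hfd Hf') in Hlt.
  apply Rnot_le_lt. intros Hge.
  assert (Hext : f1 0 p = 1 /\ f0 0 p = 0)
    by (pose proof (rates_range p Hp); unfold gap_factor in Hge; lra).
  unfold I01 in Hp.
  assert (Ha : 0 <= p * a).
  { destruct (Req_dec p 0) as [->|Hp0]; [lra|].
    apply Rmult_le_pos; [lra|].
    apply (deriv_within_max_left (fun y => f1 0 y) p a); [lra | | exact Da].
    intros y Hy. destruct (rates_range y Hy). lra. }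
  assert (Hb : 0 <= (1 - p) * b).
  { destruct (Req_dec p 1) as [->|Hp1]; [lra|].
    apply Rmult_le_pos; [lra|].
    apply (deriv_within_min_right (fun y => f0 0 y) p b); [lra | | exact Db].
    intros y Hy. destruct (rates_range y Hy). lra. }
  lra.
Qed.

Lemma AA1_step_advantaged (s : state) (j : group) : s j >= s (other j) ->
  forall g, AA1_step f0 f1 s g
            = s g * f1 0 (s (other j)) + (1 - s g) * f0 0 (s (other j)).
Proof.
  intros Hj g. unfold AA1_step, DT_update, AA1_beta0, AA1_beta1.
  rewrite (AA1_rate_of_advantaged s j Hj). reflexivity.
Qed.

(* Along the DT trajectory, profiles stay in [0,1], j stays advantaged (the
   gap is multiplied by gap_factor >= 0), and the other group follows the
   unconstrained dynamics f. *)
Lemma AA1_DT_invariant (s0 : state) (j : group) :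
  (forall g, I01 (s0 g)) -> s0 j >= s0 (other j) ->
  forall t, (forall g, I01 (AA1_DT_traj f0 f1 s0 t g)) /\
    AA1_DT_traj f0 f1 s0 t j >= AA1_DT_traj f0 f1 s0 t (other j) /\
    AA1_DT_traj f0 f1 s0 t (other j) = Nat.iter t f (s0 (other j)).
Proof.
  intros Hs0 Hj t. induction t as [|t [Hrange [Hadv Horb]]]; [simpl; auto|].
  change (AA1_DT_traj f0 f1 s0 (S t)) with (AA1_step f0 f1 (AA1_DT_traj f0 f1 s0 t)).
  set (s := AA1_DT_traj f0 f1 s0 t) in *.
  rewrite !(AA1_step_advantaged s j Hadv).
  destruct (rates_range (s (other j)) (Hrange _)) as [[H0 H01] H1].
  split; [|split].
  - intros g. rewrite (AA1_step_advantaged s j Hadv). apply convex_comb_I01; [apply Hrange | unfold I01; lra | unfold I01; lra].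
  - assert (0 <= (s j - s (other j)) * (f1 0 (s (other j)) - f0 0 (s (other j))))
      by (apply Rmult_le_pos; lra).
    lra.
  - simpl. rewrite <- Horb, Hf. reflexivity.
Qed.

(* DT: once the disadvantaged group is close to pstar, the gap contracts by a
   factor q < 1 per step. *)
Lemma AA1_DT_equalizes (s0 : state) (j : group) (pstar : R) :
  (forall g, I01 (s0 g)) -> s0 j >= s0 (other j) -> I01 pstar -> gap_factor pstar < 1 ->
  Un_cv (fun t => Nat.iter t f (s0 (other j))) pstar ->
  Un_cv (fun t => Rabs (AA1_DT_traj f0 f1 s0 t GA - AA1_DT_traj f0 f1 s0 t GB)) 0.
Proof.
  intros Hs0 Hj Hp Hlt Hcv.
  destruct (gap_factor_near pstar Hp Hlt) as [q [d [Hq [Hd Hnear]]]].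
  destruct (Hcv d Hd) as [N HN].
  apply (geometric_decay _ q N Hq); [intros; apply Rabs_pos|].
  intros n Hn.
  destruct (AA1_DT_invariant s0 j Hs0 Hj n) as [Hrange [Hadv Horb]].
  destruct (AA1_DT_invariant s0 j Hs0 Hj (S n)) as [_ [Hadv' _]].
  rewrite (gap_of_advantaged _ j Hadv), (gap_of_advantaged _ j Hadv').
  change (AA1_DT_traj f0 f1 s0 (S n)) with (AA1_step f0 f1 (AA1_DT_traj f0 f1 s0 n)) in *.
  set (s := AA1_DT_traj f0 f1 s0 n) in *.
  rewrite !(AA1_step_advantaged s j Hadv).
  assert (Hc : gap_factor (s (other j)) <= q).
  { apply Hnear; [apply Hrange|]. rewrite Horb. apply HN. lia. }
  unfold gap_factor in Hc. nra.
Qed.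

(* Under AA1 both groups share the selection rate m = AA1_beta1, so the signed
   gap D = pi(1|j) - pi(1|not j) satisfies D' = D (gap_factor m - 1). *)
Lemma AA1_CT_gap_deriv (s0 : state) (j : group) (pi : R -> state) :
  AA1_CT_sol f0 f1 s0 pi ->
  forall t, 0 <= t -> deriv_within nonneg (fun s => pi s j - pi s (other j)) t
    ((pi t j - pi t (other j)) * (gap_factor (AA1_beta1 (pi t) j) - 1)).
Proof.
  intros [_ [_ PD]] t Ht.
  pose proof (deriv_within_minus nonneg _ _ t _ _ (PD t j Ht) (PD t (other j) Ht)) as Hgap.
  unfold CT_field, AA1_beta0, AA1_beta1 in *.
  set (m := pi t (other (advantaged (pi t)))) in *.
  replace ((pi t j - pi t (other j)) * (gap_factor m - 1))
    with (pi t j * (f1 0 m - 1) + (1 - pi t j) * f0 0 m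
          - (pi t (other j) * (f1 0 m - 1) + (1 - pi t (other j)) * f0 0 m))
    by (unfold gap_factor; ring).
  exact Hgap.
Qed.

(* CT: the gap keeps its sign, so the disadvantaged group solves the
   unconstrained ODE and converges to pstar; then D' <= -(1 - q) D. *)
Lemma AA1_CT_equalizes (s0 : state) (j : group) (pstar : R) (pi : R -> state) :
  s0 j >= s0 (other j) -> I01 pstar -> gap_factor pstar < 1 ->
  (forall p, CT_sol f (s0 (other j)) p -> cv_infty_R p pstar) ->
  AA1_CT_sol f0 f1 s0 pi -> cv_infty_R (fun t => Rabs (pi t GA - pi t GB)) 0.
Proof.
  intros Hj Hp Hlt Hcv Hsol.
  pose proof (AA1_CT_gap_deriv s0 j pi Hsol) as HD.
  destruct Hsol as [P0 [PI PD]].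
  set (o := other j) in *.
  set (Dg := fun t => pi t j - pi t o) in *.
  set (Dg' := fun t => Dg t * (gap_factor (AA1_beta1 (pi t) j) - 1)).
  assert (Hfac : forall t, 0 <= t -> 0 <= gap_factor (AA1_beta1 (pi t) j) <= 1)
    by (intros t Ht; apply gap_factor_range, PI; exact Ht).
  (* j stays advantaged: |D| never increases and D(0) >= 0 *)
  assert (Hpos : forall t, 0 <= t -> 0 <= Dg t).
  { apply (halfline_sign_preserved Dg Dg' HD).
    - intros t Ht. specialize (Hfac t ltac:(lra)). unfold Dg'. nra.
    - unfold Dg. rewrite !P0. lra. }
  assert (Hrate : forall t, 0 <= t -> AA1_beta1 (pi t) j = pi t o).
  { intros t Ht. apply AA1_rate_of_advantaged. fold o.
    specialize (Hpos t Ht). unfold Dg in Hpos. lra. }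
  assert (Horb : CT_sol f (s0 o) (fun t => pi t o)).
  { split; [apply P0|]. split; [intros t Ht; apply PI; exact Ht|].
    intros t Ht. specialize (PD t o Ht).
    change (AA1_beta1 (pi t) o) with (AA1_beta1 (pi t) j) in PD.
    unfold CT_field, AA1_beta0 in PD. rewrite (Hrate t Ht) in PD.
    rewrite Hf. replace (pi t o * f1 0 (pi t o) + (1 - pi t o) * f0 0 (pi t o) - pi t o)
      with (pi t o * (f1 0 (pi t o) - 1) + (1 - pi t o) * f0 0 (pi t o)) by ring.
    exact PD. }
  destruct (gap_factor_near pstar Hp Hlt) as [q [d [Hq [Hd Hnear]]]].
  destruct (Hcv _ Horb d Hd) as [T0 HT0].
  assert (Hdecay : cv_infty_R Dg 0).
  { apply (halfline_decay Dg Dg' (1 - q) (Rmax T0 1) ltac:(lra)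
             (Rlt_le_trans _ _ _ Rlt_0_1 (Rmax_r _ _)) HD Hpos).
    - intros t Ht. specialize (Hfac t ltac:(lra)). specialize (Hpos t ltac:(lra)).
      unfold Dg'. nra.
    - intros t Ht. pose proof (Rmax_l T0 1). pose proof (Rmax_r T0 1).
      assert (Hc : gap_factor (AA1_beta1 (pi t) j) <= q).
      { rewrite (Hrate t ltac:(lra)). apply Hnear; [apply PI; lra | apply HT0; lra]. }
      specialize (Hpos t ltac:(lra)). unfold Dg'. nra. }
  intros eps Heps. destruct (Hdecay eps Heps) as [T HT].
  exists (Rmax T 0). intros t Ht. pose proof (Rmax_l T 0). pose proof (Rmax_r T 0).
  specialize (Hpos t ltac:(lra)). specialize (HT t ltac:(lra)).
  rewrite (gap_of_advantaged (pi t) j) by (fold o; unfold Dg in Hpos; lra).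
  exact HT.
Qed.

End AA1.

Theorem mainTheorem11
  (f0 f1 : R -> R -> R)
  (Hf0 : C1_Sq f0) (Hf1 : C1_Sq f1)
  (Hf0r : forall x y, Sq01 x y -> I01 (f0 x y))
  (Hf1r : forall x y, Sq01 x y -> I01 (f1 x y))
  (Hsq : forall x y, Sq01 x y -> f1 x y >= f0 x y)
  (f : R -> R)
  (Hf : forall p, f p = p * f1 0 p + (1 - p) * f0 0 p)
  (fd : R -> R) (Hfd : forall p, I01 p -> deriv_within I01 f p (fd p))
  (k : nat) (pe delta : nat -> R)
  (Hslope : forall i, (1 <= i <= k)%nat ->
     exists r L, 0 < r /\ 0 <= L < 1 /\
       forall p, I01 p -> pe i - r <= p <= pe i + r -> fd p <= L)
  (s0 : state) (Hs0 : forall g, I01 (s0 g))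
  (j : group) (Hj : s0 j >= s0 (other j))
  (Hnd : forall i, (1 <= i <= k - 1)%nat -> s0 (other j) <> delta i) :
  (k_eq_DT f k pe delta ->
     Un_cv (fun t => Rabs (AA1_DT_traj f0 f1 s0 t GA - AA1_DT_traj f0 f1 s0 t GB)) 0)
  /\
  (k_eq_CT f k pe delta ->
     forall pi, AA1_CT_sol f0 f1 s0 pi ->
       cv_infty_R (fun t => Rabs (pi t GA - pi t GB)) 0).
Proof.
  (* at every stable equilibrium the slope condition f' < 1 forces a
     contracting gap factor *)
  assert (Hcontract : forall i, (1 <= i <= k)%nat -> I01 (pe i) ->
            gap_factor f0 f1 (pe i) < 1).
  { intros i Hi Hpi. destruct (Hslope i Hi) as [r [L [Hr [HL Hfd_le]]]].
    apply (gap_factor_lt_one f0 f1 Hf0 Hf1 Hf0r Hf1r Hsq f Hf (pe i) (fd (pe i)) Hpi (Hfd _ Hpi)).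
    specialize (Hfd_le (pe i) Hpi ltac:(lra)). lra. }
  assert (Hbasin : (1 <= k)%nat -> exists i, (1 <= i <= k)%nat /\ in_basin k delta i (s0 (other j)))
    by (intros Hk; exact (basin_exists k delta _ Hk (Hs0 _) Hnd)).
  split.
  - intros [[Hk [_ [Hpe _]]] Hcv].
    destruct (Hbasin Hk) as [i [Hi Hb]]. destruct (Hpe i Hi) as [Hpi _].
    exact (AA1_DT_equalizes f0 f1 Hf0 Hf1 Hf0r Hf1r Hsq f Hf s0 j (pe i)
             Hs0 Hj Hpi (Hcontract i Hi Hpi) (Hcv i Hi _ Hb)).
  - intros [[Hk [_ [Hpe _]]] Hcv] pi Hsol.
    destruct (Hbasin Hk) as [i [Hi Hb]]. destruct (Hpe i Hi) as [Hpi _].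
    exact (AA1_CT_equalizes f0 f1 Hf0 Hf1 Hf0r Hf1r Hsq f Hf s0 j (pe i) pi
             Hj Hpi (Hcontract i Hi Hpi) (Hcv i Hi _ Hb) Hsol).
Qed.
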